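(* Let $T:X\to X$ be a continuous map on a Hausdorff topological space and $x\in X$. (a) For every $0<\delta\leq1$ the following are equivalent: (i) $x$ is periodic with period at most $\lfloor1/\delta\rfloor$; (ii) $x$ is $\underline{\mathcal{BD}}_\delta$-recurrent; (iii) $x$ is $\underline{\mathcal{D}}_\delta$-recurrent; (iv) $x$ is $\overline{\mathcal{D}}_\delta$-recurrent; (v) $x$ is $\overline{\mathcal{BD}}_\delta$-recurrent. In particular, if $T$ is $\overline{\mathcal{BD}}_\delta$-recurrent then $T^M=I$ for $M=\lfloor1/\delta\rfloor!$. (b) The following are equivalent: (i) $Tx=x$; (ii) $x$ is $\mathcal{I}^*$-recurrent; (iii) $x$ is $\mathcal{TS}$-recurrent; (iv) $x$ is $\mathcal{T}$-recurrent; (v) $x$ is $\overline{\mathcal{BD}}_\delta$-recurrent for some $\delta>1/2$; (vi) for every neighbourhood $U$ of $x$ the set $N(x,U)$ contains two consecutive integers.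
   Context: $N(x,U)=\{n\in\mathbb{N}_0:T^nx\in U\}$. For a family $\mathcal{F}$ of subsets of $\mathbb{N}_0$, $x$ is $\mathcal{F}$-recurrent if $N(x,U)\in\mathcal{F}$ for every neighbourhood $U$ of $x$, and $T$ is $\mathcal{F}$-recurrent if the set of $\mathcal{F}$-recurrent points is dense. Densities of $A\subset\mathbb{N}_0$: $\overline{\mathrm{Bd}}(A)=\lim_{M\to\infty}\max_{n\geq0}\frac{\#(A\cap[n+1,n+M])}{M}$, $\underline{\mathrm{Bd}}(A)=\lim_{M\to\infty}\inf_{n\geq0}\frac{\#(A\cap[n+1,n+M])}{M}$, $\overline{\mathrm{dens}}(A)=\limsup_{M}\frac{\#(A\cap[1,M])}{M}$, $\underline{\mathrm{dens}}(A)=\liminf_M\frac{\#(A\cap[1,M])}{M}$. For $0<\delta\leq1$: $\underline{\mathcal{BD}}_\delta=\{A:\underline{\mathrm{Bd}}(A)\geq\delta\}$, $\overline{\mathcal{BD}}_\delta=\{A:\overline{\mathrm{Bd}}(A)\geq\delta\}$, $\underline{\mathcal{D}}_\delta=\{A:\underline{\mathrm{dens}}(A)\geq\delta\}$, $\overline{\mathcal{D}}_\delta=\{A:\overline{\mathrm{dens}}(A)\geq\delta\}$. $\mathcal{I}^*$ is the family of cofinite subsets of $\mathbb{N}_0$; $\mathcal{T}$ is the family of thick sets ($A$ such that for every $m\in\mathbb{N}$ there is $a_m$ with $[a_m,a_m+m]\subset A$); $\mathcal{TS}$ is the family of thickly syndetic sets ($A$ such that for every $m\in\mathbb{N}$ there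 is a syndetic set $A_m$ with $A_m+[0,m]\subset A$, where syndetic means having bounded gaps). *)

From HB Require Import structures.
From mathcomp Require Import all_boot all_order all_algebra.
From mathcomp Require Import all_classical all_reals all_analysis.
Set Implicit Arguments. Unset Strict Implicit. Unset Printing Implicit Defensive.
Import Order.TTheory GRing.Theory Num.Theory numFieldNormedType.Exports.
Local Open Scope classical_set_scope.
Local Open Scope ring_scope.

Definition Nret {X : topologicalType} (T : X -> X) (x : X) (U : set X) : set nat :=
  [set n | U (iter n T x)].

Definition frec {X : topologicalType} (F : set nat -> Prop) (T : X -> X) (x : X) :=
  forall U : set X, nbhs x U -> F (Nret T x U).

Definition frec_map {X : topologicalType} (F : set nat -> Prop) (T : X -> X) :=
  dense [set x | frec F T x].

Definition cnt (A : set nat) (n M : nat) : nat :=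
  \sum_(n.+1 <= k < (n + M).+1) ((k \in A) : nat).

Definition upBd {R : realType} (A : set nat) : R :=
  limn ((fun M : nat => sup [set ((cnt A n M)%:R / M%:R : R) | n in [set: nat]]) : R^nat).
Definition lowBd {R : realType} (A : set nat) : R :=
  limn ((fun M : nat => inf [set ((cnt A n M)%:R / M%:R : R) | n in [set: nat]]) : R^nat).
Definition updens {R : realType} (A : set nat) : R :=
  limn_sup (fun M : nat => ((cnt A 0 M)%:R / M%:R : R)).
Definition lowdens {R : realType} (A : set nat) : R :=
  limn_inf (fun M : nat => ((cnt A 0 M)%:R / M%:R : R)).

Definition lowBD_fam {R : realType} (d : R) : set nat -> Prop := fun A => d <= lowBd A.
Definition upBD_fam {R : realType} (d : R) : set nat -> Prop := fun A => d <= upBd A.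
Definition lowD_fam {R : realType} (d : R) : set nat -> Prop := fun A => d <= lowdens A.
Definition upD_fam {R : realType} (d : R) : set nat -> Prop := fun A => d <= updens A.

Definition cofinite_fam : set nat -> Prop := fun A => finite_set (~` A).

Definition thick_fam : set nat -> Prop := fun A =>
  forall m : nat, (0 < m)%N -> exists a : nat, forall j : nat, (j <= m)%N -> A (a + j)%N.

Definition syndetic (A : set nat) : Prop :=
  exists g : nat, forall n : nat, exists a : nat, A a /\ (n <= a <= n + g)%N.

Definition thickly_syndetic_fam : set nat -> Prop := fun A =>
  forall m : nat, (0 < m)%N -> exists Am : set nat, syndetic Am /\
    (forall a j : nat, Am a -> (j <= m)%N -> A (a + j)%N).

From HB Require Import structures.
From mathcomp Require Import all_boot all_order all_algebra.
From mathcomp Require Import all_classical all_reals all_analysis.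
From mathcomp Require Import lra zify.
Import Order.TTheory GRing.Theory Num.Theory numFieldNormedType.Exports.
Local Open Scope classical_set_scope.
Local Open Scope ring_scope.

(* Hence sets
   containing all multiples of p have lowBd >= 1/p, and sets whose elements
   are more than k apart have upBd <= 1/(k+1).  Dynamically, a point without
   period <= k has a neighbourhood with k-separated return times (Hausdorff
   separation plus continuity of the iterates), while returns to a periodic
   point contain all multiples of the period.  The main theorem combines these
   two counting facts; density of recurrent points and continuity of T^(N!)
   give T^(N!) = id. *)

Section Fekete.
Variables (R : realType) (w : nat -> R).
Hypothesis w_subadd : forall M N, w (M + N)%N <= w M + w N.
Hypothesis w_bound : forall M, `|w M| <= M%:R.

Let avg M := w M / M%:R.

Lemma subadd_iter q m r : w (q * m + r)%N <= q%:R * w m + w r.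
Proof.
elim: q => [|q IH]; first by rewrite mul0n add0n mul0r add0r.
rewrite mulSn -addnA (le_trans (w_subadd _ _)) // mulrSr.
by rewrite [X in _ <= X](_ : _ = w m + (q%:R * w m + w r)) ?lerD2l //; lra.
Qed.

Lemma avg_bound M : `|avg M| <= 1.
Proof.
rewrite /avg normrM normfV; case: M => [|M]; first by rewrite normr0 invr0 mulr0.
by rewrite normr_nat ler_pdivrMr ?mul1r ?ltr0n.
Qed.

(* Writing M = q m + r with r < m shows that avg M is at most avg m up to an
   error of order m / M. *)
Lemma avg_le m M : (0 < m)%N -> (0 < M)%N -> avg M <= avg m + 2 * m%:R / M%:R.
Proof.
move=> m0 M0; have mR : 0 < m%:R :> R by rewrite ltr0n.
have MR : 0 < M%:R :> R by rewrite ltr0n.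
have hM := divn_eq M m; set q := (M %/ m)%N in hM; set r := (M %% m)%N in hM.
have rR : r%:R < m%:R :> R by rewrite ltr_nat ltn_mod.
have hw : w M <= q%:R * w m + w r by rewrite {1}hM subadd_iter.
have hMR : M%:R = q%:R * m%:R + r%:R :> R by rewrite {1}hM natrD natrM.
have := avg_bound m; have := w_bound r; set a := avg m.
rewrite !ler_norml => /andP[w1 w2] /andP[a1 a2].
have wm : w m = a * m%:R by rewrite /a /avg mulfVK // gt_eqF.
rewrite /avg ler_pdivrMr // mulrDl divfK ?gt_eqF // (le_trans hw) // hMR wm.
have q0 : 0 <= q%:R :> R by [].
have r0 : 0 <= r%:R :> R by [].
nra.
Qed.

(* The limit is inf_m avg m: given e, pick m with avg m < inf + e/2; then
   avg_le gives avg M < inf + e for all large M. *)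
Lemma fekete : exists L, avg @ \oo --> L /\ forall m, (0 < m)%N -> L <= avg m.
Proof.
set S := [set avg m | m in [set m | (0 < m)%N]].
have S0 : S !=set0 by exists (avg 1); exists 1%N.
have Slb : has_lbound S.
  by exists (-1) => _ [m _ <-]; move: (avg_bound m); rewrite ler_norml => /andP[].
exists (inf S); split; last by move=> m m0; apply: ge_inf => //; exists m.
apply/cvgrPdist_lt => e e0.
have e20 : 0 < e / 2 by rewrite divr_gt0.
have [_ [m /= m0 <-] hm] := inf_adherent e20 (conj S0 Slb).
exists (Num.truncn (4 * m%:R / e)).+1 => // M /= NM.
have M0 : (0 < M)%N by apply: leq_trans NM.
have MR : 0 < M%:R :> R by rewrite ltr0n.
have lb : inf S <= avg M by apply: ge_inf => //; exists M.
have err : 2 * m%:R / M%:R < e / 2.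
  have : 4 * m%:R / e < M%:R.
    by apply: lt_le_trans (truncnS_gt _) _; rewrite ler_nat.
  rewrite ltr_pdivrMr // ltr_pdivrMr // => h; nra.
have := @avg_le m M m0 M0; rewrite distrC ger0_norm ?subr_ge0 //; lra.
Qed.
End Fekete.

Section limn_sup_inf_monotone.
Variable R : realType.
Implicit Types u v : R^nat.

Lemma le_limn_sup u v : bounded_fun u -> bounded_fun v ->
  (forall n, u n <= v n) -> limn_sup u <= limn_sup v.
Proof.
move=> bu bv uv; have cvg_sups w : bounded_fun w -> cvgn (sups w).
  move=> bw; apply: nonincreasing_is_cvgn; last exact: bounded_fun_has_lbound_sups.
  exact/nonincreasing_sups/bounded_fun_has_ubound.
apply: ler_lim; [exact: cvg_sups|exact: cvg_sups|apply: nearW => n].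
apply: ge_sup; first by exists (u n); exists n => /=.
move=> _ [m /= nm <-]; apply: le_trans (uv m) _.
by apply: ub_le_sup; [exact/has_ubound_sdrop/bounded_fun_has_ubound|exists m].
Qed.

Lemma le_limn_inf u v : bounded_fun u -> bounded_fun v ->
  (forall n, u n <= v n) -> limn_inf u <= limn_inf v.
Proof.
move=> bu bv uv; have cvg_infs w : bounded_fun w -> cvgn (infs w).
  move=> bw; apply: nondecreasing_is_cvgn; last exact: bounded_fun_has_ubound_infs.
  exact/nondecreasing_infs/bounded_fun_has_lbound.
apply: ler_lim; [exact: cvg_infs|exact: cvg_infs|apply: nearW => n].
apply: lb_le_inf; first by exists (v n); exists n => /=.
move=> _ [m /= nm <-]; apply: le_trans (uv m).
by apply: ge_inf; [exact/has_lbound_sdrop/bounded_fun_has_lbound|exists m].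
Qed.
End limn_sup_inf_monotone.

Section WindowCount.
Variable A : set nat.

Lemma cnt_le n M : (cnt A n M <= M)%N.
Proof.
apply: (@leq_trans (\sum_(n.+1 <= k < (n + M).+1) 1)%N).
  by apply: leq_sum => k _; apply: leq_b1.
by rewrite sum_nat_const_nat muln1 subSS addKn.
Qed.

Lemma cnt_split n M N : cnt A n (M + N) = (cnt A n M + cnt A (n + M) N)%N.
Proof. by rewrite /cnt addnA (@big_cat_nat _ _ _ (n + M).+1) // ltnS leq_addr. Qed.

Lemma cnt_gt0 n M k : (n < k <= n + M)%N -> A k -> (0 < cnt A n M)%N.
Proof.
move=> nkM Ak; rewrite /cnt (bigD1_seq k) ?iota_uniq ?mem_index_iota ?ltnS //=.
by rewrite (mem_set Ak).
Qed.

Definition separated (k : nat) (B : set nat) :=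
  forall i q, (0 < q <= k)%N -> B i -> ~ B (i + q)%N.

Lemma cnt_separated k : separated k A -> forall n, (cnt A n k.+1 <= 1)%N.
Proof.
move=> sepA n; suff : forall M, (M <= k.+1)%N -> (cnt A n M <= 1)%N by apply.
elim=> [|M IH] Mk; first by rewrite /cnt addn0 big_geq.
rewrite -addn1 cnt_split /cnt addn1 big_nat1.
have [AnM|nAnM] := pselect (A (n + M).+1); last first.
  by rewrite (memNset nAnM) addn0 IH // ltnW.
rewrite (mem_set AnM) /= big_nat_cond big1 // => i /andP[/andP[ni iM] _].
apply/eqP; rewrite eqb0; apply/negP => /set_mem Ai.
apply: (sepA i ((n + M).+1 - i)%N) Ai _; first lia.
by rewrite subnKC // ltnW.
Qed.

Lemma cnt_max : exists F : nat -> nat,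
  (forall M n, (cnt A n M <= F M)%N) /\ (forall M, exists n, cnt A n M = F M).
Proof.
suff /choice[F HF] : forall M, exists c,
    (exists n, cnt A n M = c) /\ forall n, (cnt A n M <= c)%N.
  by exists F; split=> [M n|M]; [apply: (HF M).2|apply: (HF M).1].
move=> M; pose P c := `[< exists n, cnt A n M = c >].
have exP : exists c, P c by exists (cnt A 0 M); apply/asboolP; exists 0%N.
have ubP c : P c -> (c <= M)%N by move=> /asboolP[n <-]; apply: cnt_le.
case: (ex_maxnP exP ubP) => c /asboolP Pc maxc; exists c; split => // n.
by apply: maxc; apply/asboolP; exists n.
Qed.

Lemma cnt_min : exists G : nat -> nat,
  (forall M n, (G M <= cnt A n M)%N) /\ (forall M, exists n, cnt A n M = G M).
Proof.
suff /choice[G HG] : forall M, exists c,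
    (exists n, cnt A n M = c) /\ forall n, (c <= cnt A n M)%N.
  by exists G; split=> [M n|M]; [apply: (HG M).2|apply: (HG M).1].
move=> M; pose P c := `[< exists n, cnt A n M = c >].
have exP : exists c, P c by exists (cnt A 0 M); apply/asboolP; exists 0%N.
case: (ex_minnP exP) => c /asboolP Pc minc; exists c; split => // n.
by apply: minc; apply/asboolP; exists n.
Qed.
End WindowCount.

Section BanachDensity.
Variable R : realType.
Implicit Types A : set nat.

Let ratio (f : nat -> nat) : R^nat := fun M => (f M)%:R / M%:R.

Lemma ler_ratio (a b M : nat) : (a <= b)%N -> a%:R / M%:R <= b%:R / M%:R :> R.
Proof. by move=> ab; rewrite ler_wpM2r ?invr_ge0 ?ler_nat. Qed.

Lemma ratio_bounded (f : nat -> nat) : (forall M, f M <= M)%N -> bounded_fun (ratio f).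
Proof.
move=> fM; rewrite /= /bounded_near; near=> K => M _ /=.
apply: (@le_trans _ _ 1); last by near: K; exact: nbhs_pinfty_ge.
rewrite /ratio normrM normfV !normr_nat.
case: M (fM M) => [|M] fM'; first by rewrite invr0 mulr0.
by rewrite ler_pdivrMr ?ltr0n // mul1r ler_nat.
Unshelve. all: by end_near. Qed.

(* The maximal window count F is subadditive, so by Fekete its average
   converges; the limit is upBd A and lies below every average F m / m. *)
Lemma upBd_spec A : exists F : nat -> nat,
  [/\ forall M n, (cnt A n M <= F M)%N, forall M, exists n, cnt A n M = F M,
      ratio F @ \oo --> (upBd A : R) &
      forall m, (0 < m)%N -> (upBd A : R) <= ratio F m].
Proof.
have [F [cntF attF]] := cnt_max A.
have [L [FL leL]] : exists L, ratio F @ \oo --> L /\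
    forall m, (0 < m)%N -> L <= ratio F m.
  apply: (@fekete R (fun M => (F M)%:R)) => [M N|M]; last first.
    by rewrite normr_nat ler_nat; have [n <-] := attF M; apply: cnt_le.
  by rewrite -natrD ler_nat; have [n <-] := attF (M + N)%N; rewrite cnt_split leq_add.
have supE M : sup [set ((cnt A n M)%:R / M%:R : R) | n in [set: nat]] = ratio F M.
  have [n0 cntE] := attF M; apply/eqP; rewrite eq_le; apply/andP; split.
    apply: ge_sup; first by exists ((cnt A 0 M)%:R / M%:R), 0%N.
    by move=> _ [n _ <-]; apply: ler_ratio; apply: cntF.
  apply: ub_le_sup; last by exists n0 => //; rewrite cntE.
  by exists (ratio F M) => _ [n _ <-]; apply: ler_ratio; apply: cntF.
have -> : upBd A = L by rewrite /upBd (funext supE); exact: cvg_lim FL.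
by exists F.
Qed.

(* Dually, the minimal window count is superadditive. *)
Lemma lowBd_spec A : exists G : nat -> nat,
  [/\ forall M n, (G M <= cnt A n M)%N, forall M, exists n, cnt A n M = G M,
      ratio G @ \oo --> (lowBd A : R) &
      forall m, (0 < m)%N -> ratio G m <= (lowBd A : R)].
Proof.
have [G [cntG attG]] := cnt_min A.
have [L [GL leL]] : exists L, (fun M => - (G M)%:R / M%:R : R) @ \oo --> L /\
    forall m, (0 < m)%N -> L <= - (G m)%:R / m%:R.
  apply: (@fekete R (fun M => - (G M)%:R)) => [M N|M]; last first.
    by rewrite normrN normr_nat ler_nat; have [n <-] := attG M; apply: cnt_le.
  rewrite -opprD lerN2 -natrD ler_nat; have [n <-] := attG (M + N)%N.
  by rewrite cnt_split leq_add.
have GL' : ratio G @ \oo --> - L.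
  rewrite (_ : ratio G = fun M => - (- (G M)%:R / M%:R)); first exact: cvgN.
  by apply: funext => M; rewrite mulNr opprK.
have infE M : inf [set ((cnt A n M)%:R / M%:R : R) | n in [set: nat]] = ratio G M.
  have [n0 cntE] := attG M; apply/eqP; rewrite eq_le; apply/andP; split.
    apply: ge_inf; last by exists n0 => //; rewrite cntE.
    by exists (ratio G M) => _ [n _ <-]; apply: ler_ratio; apply: cntG.
  apply: lb_le_inf; first by exists ((cnt A 0 M)%:R / M%:R), 0%N.
  by move=> _ [n _ <-]; apply: ler_ratio; apply: cntG.
have -> : lowBd A = - L by rewrite /lowBd (funext infE); exact: cvg_lim GL'.
by exists G; split => // m /leL; rewrite lerNr -mulNr.
Qed.

(* Ordinary densities lie between the Banach densities: each average over
   [1, M] is squeezed between the extremal window averages. *)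
Lemma density_bounds A :
  [/\ lowBd A <= lowdens A :> R, lowBd A <= updens A :> R,
      lowdens A <= upBd A :> R & updens A <= upBd A :> R].
Proof.
have [F [cntF attF FL _]] := upBd_spec A.
have [G [cntG attG GL _]] := lowBd_spec A.
have FM M : (F M <= M)%N by have [n <-] := attF M; apply: cnt_le.
have GM M : (G M <= M)%N by have [n <-] := attG M; apply: cnt_le.
have b0 : bounded_fun (ratio (cnt A 0)) by apply: ratio_bounded => M; apply: cnt_le.
have [bF bG] := (@ratio_bounded F FM, @ratio_bounded G GM).
have [lowG upG] := cvg_limn_inf_sup GL; have [lowF upF] := cvg_limn_inf_sup FL.
split.
- by rewrite -lowG; apply: le_limn_inf => // M; apply: ler_ratio.
- by rewrite -upG; apply: le_limn_sup => // M; apply: ler_ratio.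
- by rewrite -lowF; apply: le_limn_inf => // M; apply: ler_ratio.
- by rewrite -upF; apply: le_limn_sup => // M; apply: ler_ratio.
Qed.

Lemma lowBd_le_upBd A : lowBd A <= upBd A :> R.
Proof. by have [lo _ up _] := density_bounds A; apply: le_trans lo up. Qed.

Lemma upBd_le A m b : (0 < m)%N -> (forall n, cnt A n m <= b)%N ->
  upBd A <= b%:R / m%:R :> R.
Proof.
move=> m0 cntb; have [F [_ attF _ /(_ m m0) leF]] := upBd_spec A.
by apply: le_trans leF _; apply: ler_ratio; have [n <-] := attF m.
Qed.

Lemma lowBd_ge A m b : (0 < m)%N -> (forall n, b <= cnt A n m)%N ->
  b%:R / m%:R <= lowBd A :> R.
Proof.
move=> m0 cntb; have [G [_ attG _ /(_ m m0) leG]] := lowBd_spec A.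
by apply: le_trans leG; apply: ler_ratio; have [n <-] := attG m.
Qed.

(* A set containing all multiples of p meets every window of length p. *)
Lemma lowBd_multiples A p : (0 < p)%N -> (forall j, A (p * j)%N) ->
  p%:R^-1 <= lowBd A :> R.
Proof.
move=> p0 Ap; have := @lowBd_ge A p 1 p0; rewrite div1r; apply=> n.
apply: (@cnt_gt0 _ _ _ (p * (n %/ p).+1)) => //.
by rewrite mulnS {2 3}(divn_eq n p) [(_ * p)%N]mulnC; have := ltn_pmod n p0; lia.
Qed.

Lemma upBd_separated A k : separated k A -> upBd A <= k.+1%:R^-1 :> R.
Proof.
by move=> sepA; have := @upBd_le A k.+1 1 isT; rewrite div1r; apply; apply: cnt_separated.
Qed.
End BanachDensity.

Section Hausdorff.
Variables (X Y : topologicalType).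
Hypothesis hY : hausdorff_space Y.

Lemma hausdorff_separate (a b : Y) : a <> b ->
  exists A B, [/\ nbhs a A, nbhs b B & forall z, A z -> B z -> False].
Proof.
move=> ab; apply: contrapT => noAB; apply: ab; apply: hY => A B hA hB.
apply: contrapT => AB0; apply: noAB; exists A, B; split => // z Az Bz.
by apply: AB0; exists z.
Qed.

Lemma continuous_eq_dense (f g : X -> Y) (D : set X) :
  continuous f -> continuous g -> dense D -> {in D, f =1 g} -> f = g.
Proof.
move=> cf cg dD fg; apply/funext => z; apply: contrapT => /hausdorff_separate.
move=> [A [B [hA hB AB]]].
have : nbhs z (f @^-1` A `&` g @^-1` B) by apply: filterI; [exact: cf|exact: cg].
rewrite nbhsE => -[V [oV Vz] VAB].
have [w [Vw Dw]] := dD V (ex_intro _ z Vz) oV.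
have [Afw Bgw] := VAB w Vw.
by apply: (AB (f w)) => //; rewrite fg ?inE.
Qed.
End Hausdorff.

Section Iterates.
Variables (X : topologicalType) (T : X -> X).
Hypotheses (hX : hausdorff_space X) (hT : continuous T).

Lemma continuous_iter n : continuous (iter n T).
Proof.
elim: n => [x|n IH x]; first exact: cvg_id.
exact: (continuous_comp (IH x) (hT _)).
Qed.

(* A point with no period q <= k has a neighbourhood U whose return times
   N(x,U) are k-separated: U and T^q U are disjoint near x for 0 < q <= k. *)
Lemma separated_returns k x : (forall q, (0 < q <= k)%N -> iter q T x <> x) ->
  exists U, nbhs x U /\ separated k (Nret T x U).
Proof.
elim: k => [|k IH] noper.
  by exists setT; split; [exact: filterT|move=> i [|q]].
have [U [hU sepU]] : exists U, nbhs x U /\ separated k (Nret T x U).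
  by apply: IH => q /andP[q0 qk]; apply: noper; rewrite q0 ltnW.
have [A [B [hA hB AB]]] := @hausdorff_separate X hX _ _ (noper k.+1 (leqnn _)).
exists (U `&` (B `&` iter k.+1 T @^-1` A)); split.
  by apply: filterI => //; apply: filterI => //; exact: continuous_iter.
move=> i q /andP[q0]; rewrite leq_eqVlt => /orP[/eqP ->|qk] [Ui [_ Ai]] [Uiq [Biq _]].
  by apply: (AB (iter (i + k.+1) T x)) => //; rewrite addnC iterD.
by apply: (sepU i q) => //; rewrite q0.
Qed.

Lemma fixed_returns x U : T x = x -> nbhs x U -> Nret T x U = setT.
Proof.
move=> Tx hU; apply/seteqP; split => // n _.
by rewrite /Nret /= iter_fix //; apply: nbhs_singleton.
Qed.

Lemma fixed_iff_consecutive x : T x = x <->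
  forall U, nbhs x U -> exists n, Nret T x U n /\ Nret T x U n.+1.
Proof.
split=> [Tx U hU|consec]; first by exists 0%N; rewrite fixed_returns.
apply: contrapT => Tx; have [|U [hU sepU]] := @separated_returns 1 x.
  by move=> q; rewrite -(@eqn_leq 1 q) => /eqP <-.
by have [n [Un Un1]] := consec U hU; apply: (sepU n 1%N) => //; rewrite addn1.
Qed.
End Iterates.

Definition consecutive_family (F : set nat -> Prop) :=
  F setT /\ forall A, F A -> exists n, A n /\ A n.+1.

(* A cofinite set contains a whole tail of N. *)
Lemma cofinite_consecutive : consecutive_family cofinite_fam.
Proof.
split=> [|A]; first by rewrite /cofinite_fam setCT; exact: finite_set0.
rewrite /cofinite_fam finite_seqP => -[s sE].
have tail n : (\max_(i <- s) i < n)%N -> A n.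
  move=> sn; apply: contrapT => nAn.
  have ns : [set` s] n by rewrite -sE.
  by have := @leq_bigmax_seq _ s xpredT id n ns isT; rewrite leqNgt sn.
by exists (\max_(i <- s) i).+1; split; apply: tail => //; apply: ltnW.
Qed.

(* N is thick and thickly syndetic; the case m = 1 of either definition
   yields two consecutive elements. *)
Lemma thick_consecutive : consecutive_family thick_fam.
Proof.
split=> [m _|A thickA]; first by exists 0%N.
have [a Aa] := thickA 1%N isT; exists a.
by rewrite -addn1; split; [rewrite -[a]addn0|]; apply: Aa.
Qed.

Lemma thickly_syndetic_consecutive : consecutive_family thickly_syndetic_fam.
Proof.
split=> [m _|A tsA].
  by exists setT; split=> // ; exists 0%N => n; exists n; rewrite addn0 leqnn.
have [Am [[g synd] AmA]] := tsA 1%N isT; have [a [Ama _]] := synd 0%N.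
by exists a; rewrite -addn1; split; [rewrite -[a]addn0|]; apply: AmA.
Qed.

(* For 1/2 < d <= 1: N has upper Banach density 1, and a set without two
   consecutive elements is 1-separated, hence has upper Banach density <= 1/2. *)
Lemma upBD_consecutive (R : realType) (d : R) : 2^-1 < d -> d <= 1 ->
  consecutive_family (upBD_fam d).
Proof.
move=> d2 d1; split=> [|A dA].
  apply: le_trans (lowBd_le_upBd _ _); apply: le_trans d1 _.
  by have := @lowBd_multiples R setT 1 isT (fun=> I); rewrite invr1.
apply: contrapT => noconsec; suff : upBd A <= 2^-1 :> R by rewrite /upBD_fam in dA; lra.
apply: upBd_separated => i q /andP[q0 q1] Ai Aiq; apply: noconsec.
by exists i; move: Aiq; rewrite (_ : q = 1%N) ?addn1; [|apply/eqP; rewrite eqn_leq q1].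
Qed.

Section Recurrence.
Variables (R : realType) (X : topologicalType) (T : X -> X).
Hypotheses (hX : hausdorff_space X) (hT : continuous T).

Lemma fixed_iff_frec F x : consecutive_family F -> (T x = x <-> frec F T x).
Proof.
move=> [FT Fconsec]; split=> [Tx U hU|recF].
  by rewrite fixed_returns.
by apply/(@fixed_iff_consecutive X T hX hT x) => U hU; apply: Fconsec; apply: recF.
Qed.

(* Recurrence along a family sandwiched between "lowBd >= d" and "upBd >= d"
   is periodicity with period at most 1/d: returns to a periodic orbit contain
   all multiples of the period, while a point without small period has a
   neighbourhood with separated, hence sparse, return times. *)
Lemma periodic_iff_frec (d : R) x (F : set nat -> Prop) : 0 < d ->
  (forall A, d <= lowBd A -> F A) -> (forall A, F A -> d <= upBd A) ->
  ((exists p : nat, (0 < p)%N /\ (p%:Z <= Num.floor d^-1)%R /\ iter p T x = x)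
     <-> frec F T x).
Proof.
move=> d0 lowF Fup; have d1 : 0 <= d^-1 by rewrite invr_ge0 ltW.
have floorE (p : nat) : (p%:Z <= Num.floor d^-1) = (p%:R <= d^-1).
  by rewrite floor_ge_int.
split=> [[p [p0 [pd px]]] U hU|recF].
  apply: lowF; apply: le_trans (@lowBd_multiples R _ p p0 _); last first.
    by move=> j; rewrite /Nret /= mulnC iterM iter_fix //; apply: nbhs_singleton.
  by rewrite -(invrK d) lef_pV2 ?posrE ?invr_gt0 ?ltr0n // -floorE.
apply: contrapT => noper; set k := Num.truncn d^-1.
have [|U [hU sepU]] := @separated_returns X T hX hT k x.
  move=> q /andP[q0 qk] qx; apply: noper; exists q; split=> //; split=> //.
  by rewrite floorE -truncn_ge_nat.
have := Fup _ (recF U hU); apply/negP; rewrite -ltNge.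
apply: le_lt_trans (@upBd_separated R _ _ sepU) _.
by rewrite -[X in _ < X](invrK d) ltf_pV2 ?posrE ?invr_gt0 ?ltr0n // -truncn_le_nat.
Qed.

(* If the upper-Banach-recurrent points are dense, all of them have a period
   dividing N!, N = trunc (1/d), so the continuous map T^(N!) is the identity. *)
Lemma frec_map_iter_id (d : R) : 0 < d -> frec_map (upBD_fam d) T ->
  iter (Num.truncn d^-1)`! T = id.
Proof.
move=> d0 recT.
apply: (@continuous_eq_dense X X hX _ _ _ (@continuous_iter X T hT _) (fun=> cvg_id) recT).
move=> w /set_mem recw /=.
have [p [p0 [pd pw]]] := (@periodic_iff_frec d w _ d0
  (fun A dA => le_trans dA (lowBd_le_upBd R A)) (fun A dA => dA)).2 recw.
rewrite floor_ge_int -truncn_ge_nat ?invr_ge0 ?ltW // in pd.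
have pN : (p %| (Num.truncn d^-1)`!)%N by apply: dvdn_fact; rewrite p0 pd.
by rewrite -(divnK pN) iterM iter_fix.
Qed.
End Recurrence.

(* Part (a): the four density families are sandwiched between lowBd >= d and
   upBd >= d.  Part (b): each large family is a consecutive family; for upper
   Banach density d > 1/2 one may lower d to min d 1. *)
Theorem mainTheorem12 (R : realType) (X : topologicalType) (T : X -> X)
  (hX : hausdorff_space X) (hT : continuous T) :
  (forall d : R, 0 < d -> d <= 1 ->
     (forall x : X,
        let per := exists p : nat, (0 < p)%N /\ (p%:Z <= Num.floor d^-1)%R
                                   /\ iter p T x = x in
        (per <-> frec (lowBD_fam d) T x) /\
        (per <-> frec (lowD_fam d) T x) /\
        (per <-> frec (upD_fam d) T x) /\
        (per <-> frec (upBD_fam d) T x)) /\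
     (frec_map (upBD_fam d) T -> iter ((Num.truncn d^-1)`!) T = id)) /\
  (forall x : X,
     (T x = x <-> frec cofinite_fam T x) /\
     (T x = x <-> frec thickly_syndetic_fam T x) /\
     (T x = x <-> frec thick_fam T x) /\
     (T x = x <-> exists d : R, 2^-1 < d /\ frec (upBD_fam d) T x) /\
     (T x = x <-> forall U : set X, nbhs x U ->
                    exists n : nat, Nret T x U n /\ Nret T x U n.+1)).
Proof.
split=> [d d0 d1|x].
  split=> [x|]; last exact: frec_map_iter_id.
  have per F := @periodic_iff_frec R X T hX hT d x F d0.
  split; [|split; [|split]]; apply: per => A dA;
    have [lowBd_lowdens lowBd_updens lowdens_upBd updens_upBd] := density_bounds R A;
    apply: le_trans dA _; rewrite ?lowBd_le_upBd //.
have fixF F := @fixed_iff_frec X T hX hT F x.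
split; [|split; [|split; [|split]]].
- exact: fixF cofinite_consecutive.
- exact: fixF thickly_syndetic_consecutive.
- exact: fixF thick_consecutive.
- split=> [Tx|[d [d2 recd]]].
    exists 1; split; first lra.
    by apply/(fixF _ (@upBD_consecutive R 1 _ _)) => //; lra.
  have d'2 : 2^-1 < Num.min d 1 by rewrite lt_min d2; lra.
  have d'1 : Num.min d 1 <= 1 by rewrite ge_min lexx orbT.
  apply/(fixF _ (@upBD_consecutive R _ d'2 d'1)) => U hU.
  by apply: le_trans (recd U hU); rewrite ge_min lexx.
- exact: fixed_iff_consecutive.
Qed.
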